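(* Let $A\in\mathbb{R}^{n\times n}$ with $\rho(|A|)<1$ (in particular $\rho(A)<1$), let $\mathcal{X}=(I-|A|)^{-1}$ with entries $\mathcal{X}_{pq}$, let $i,j\in\{1,\dots,n\}$, and let $w\in\mathbb{R}$ satisfy $-\frac{1}{\mathcal{X}_{ij}}<w<\frac{1}{\mathcal{X}_{ij}}$ (if $\mathcal{X}_{ij}=0$ this condition imposes no restriction on $w$). Then the modified matrix $A+we_je_i^{\top}$ (adding weight $w$ to the edge $i\to j$) satisfies $\rho(A+we_je_i^{\top})<1$.
   Context: $|A|$ is the entrywise absolute value; $\rho$ is the spectral radius; $e_k$ is the $k$-th canonical unit vector. Note $\mathcal{X}\ge0$ entrywise. *)

From HB Require Import structures.
From mathcomp Require Import all_boot all_order all_algebra.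
From mathcomp Require Import classical_sets boolp reals.
From mathcomp Require Import complex.
Set Implicit Arguments. Unset Strict Implicit. Unset Printing Implicit Defensive.
Import Order.TTheory GRing.Theory Num.Theory.
Local Open Scope ring_scope.
Local Open Scope classical_set_scope.

Definition absmx (R : realType) (m n : nat) (A : 'M[R]_(m, n)) : 'M[R]_(m, n) :=
  map_mx (fun x => `|x|) A.

Definition cplxmx (R : realType) (n : nat) (A : 'M[R]_n) : 'M[R[i]]_n :=
  map_mx (fun x => x%:C%C) A.

(* Spectral radius: the largest modulus of a (complex) eigenvalue of A.
   (The set is finite; for n = 0 it is empty and sup gives 0.) *)
Definition spectral_radius (R : realType) (n : nat) (A : 'M[R]_n) : R :=
  sup [set ComplexField.Normc.normc z | z in [set z : R[i] | eigenvalue (cplxmx A) z]].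

(* Write B = |A|, E = e_j e_i^T and C = B + |w| E.  As B >= 0 has no real
   eigenvalue in [1, +oo[, X = (I - B)^-1 is entrywise nonnegative: by induction
   on the size, splitting off the leading entry, the trailing block inherits the
   eigenvalue bound and the Schur complement is a positive scalar, so the block
   inverse formula only involves nonnegative terms.  By Sherman-Morrison,
   (I - C)^-1 = X + |w| / (1 - |w| X_ij) X E X, still nonnegative as |w| X_ij < 1.
   Finally |A + w E| <= C entrywise, so a left eigenvector v for an eigenvalue z
   of A + w E gives u = |v| with |z| u <= u C; if |z| >= 1 then u (I - C) <= 0,
   whence u = u (I - C) (I - C)^-1 <= 0 and v = 0. *)

From HB Require Import structures.
From mathcomp Require Import all_boot all_order all_algebra.
From mathcomp Require Import classical_sets boolp reals.
From mathcomp Require Import complex polyrcf ring lra.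
Import Order.TTheory GRing.Theory Num.Theory.
Set Implicit Arguments. Unset Strict Implicit.
Local Open Scope ring_scope.

Definition nnegmx (R : numDomainType) m n (A : 'M[R]_(m, n)) := forall i j, 0 <= A i j.

Section NonnegativeMatrices.
Variable R : numDomainType.
Implicit Types m n k : nat.

Lemma nnegmxD m n (A B : 'M[R]_(m, n)) : nnegmx A -> nnegmx B -> nnegmx (A + B).
Proof. by move=> hA hB i j; rewrite mxE addr_ge0. Qed.

Lemma nnegmxZ m n c (A : 'M[R]_(m, n)) : 0 <= c -> nnegmx A -> nnegmx (c *: A).
Proof. by move=> hc hA i j; rewrite mxE mulr_ge0. Qed.

Lemma nnegmxM m n k (A : 'M[R]_(m, n)) (B : 'M[R]_(n, k)) :
  nnegmx A -> nnegmx B -> nnegmx (A *m B).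
Proof. by move=> hA hB i j; rewrite mxE sumr_ge0 // => l _; rewrite mulr_ge0. Qed.

Lemma nnegmx_scalar n c : 0 <= c -> nnegmx (c%:M : 'M[R]_n).
Proof. by move=> hc i j; rewrite mxE mulrn_wge0. Qed.

Lemma nnegmx_delta m n i0 j0 : nnegmx (delta_mx i0 j0 : 'M[R]_(m, n)).
Proof. by move=> i j; rewrite mxE ler0n. Qed.

Lemma nnegmx_block m1 m2 n1 n2 (Aul : 'M[R]_(m1, n1)) (Aur : 'M[R]_(m1, n2))
    (Adl : 'M[R]_(m2, n1)) (Adr : 'M[R]_(m2, n2)) :
    nnegmx Aul -> nnegmx Aur -> nnegmx Adl -> nnegmx Adr ->
  nnegmx (block_mx Aul Aur Adl Adr).
Proof.
move=> hul hur hdl hdr p q.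
rewrite -[p]splitK -[q]splitK; case: (split p) => p'; case: (split q) => q'.
- by rewrite block_mxEul.
- by rewrite block_mxEur.
- by rewrite block_mxEdl.
- by rewrite block_mxEdr.
Qed.

Lemma nnegmx_submx m1 m2 n1 n2 (A : 'M[R]_(m1 + m2, n1 + n2)) : nnegmx A ->
  [/\ nnegmx (ulsubmx A), nnegmx (ursubmx A), nnegmx (dlsubmx A) & nnegmx (drsubmx A)].
Proof. by move=> hA; split=> i j; rewrite !mxE. Qed.

Lemma nnegmx_abs m n (A : 'M[R]_(m, n)) : nnegmx (map_mx Num.norm A).
Proof. by move=> i j; rewrite mxE normr_ge0. Qed.

End NonnegativeMatrices.

Section BlockInverse.
Variable R : numFieldType.

Lemma det_block_schur n1 n2 (a : 'M[R]_n1) r c (D : 'M[R]_n2) : D \in unitmx ->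
  \det (block_mx a r c D) = \det D * \det (a - r *m invmx D *m c).
Proof.
move=> uD; have -> : block_mx a r c D =
    block_mx 1%:M (r *m invmx D) 0 1%:M *m block_mx (a - r *m invmx D *m c) 0 c D.
  by rewrite mulmx_block !mul1mx !mul0mx !add0r -!mulmxA mulVmx // mulmx1 subrK.
by rewrite det_mulmx det_ublock det_lblock !det1 !mul1r mulrC.
Qed.

Lemma nnegmx_invmx_block n1 n2 (a : 'M[R]_n1) r c (D : 'M[R]_n2) :
    let S := a - r *m invmx D *m c in
    D \in unitmx -> S \in unitmx -> nnegmx r -> nnegmx c ->
    nnegmx (invmx D) -> nnegmx (invmx S) ->
  nnegmx (invmx (block_mx a (- r) (- c) D)).
Proof.
move=> S uD uS hr hc hZ hSi; set Z := invmx D in hZ *; set Si := invmx S in hSi *.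
pose K := block_mx Si (Si *m r *m Z) (Z *m c *m Si) (Z + Z *m c *m Si *m r *m Z).
have MK : block_mx a (- r) (- c) D *m K = 1%:M.
  have DZ : D *m Z = 1%:M by rewrite mulmxV.
  have SSi : S *m Si = 1%:M by rewrite mulmxV.
  rewrite mulmx_block (scalar_mx_block n1 n2 1) !mulNmx; congr block_mx.
  - by rewrite !mulmxA -mulmxBl -/S SSi.
  - by rewrite mulmxDr opprD addrA addrAC !mulmxA -!mulmxBl -/S SSi mul1mx subrr mul0mx.
  - by rewrite !mulmxA DZ mul1mx addNr.
  - by rewrite mulmxDr !mulmxA DZ !mul1mx addrCA addNr addr0.
have [uM _] := mulmx1_unit MK.
have -> : invmx (block_mx a (- r) (- c) D) = K by rewrite -[RHS](mulKmx uM) MK mulmx1.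
have hSirZ : nnegmx (Si *m r *m Z) by apply: nnegmxM => //; apply: nnegmxM.
have hZcSi : nnegmx (Z *m c *m Si) by apply: nnegmxM => //; apply: nnegmxM.
apply: nnegmx_block => //; apply: nnegmxD => //.
by apply: nnegmxM => //; apply: nnegmxM.
Qed.

End BlockInverse.

Lemma char_poly_horner (R : comNzRingType) n (A : 'M[R]_n) y :
  (char_poly A).[y] = \det (y%:M - A).
Proof.
rewrite -horner_evalE -det_map_mx; congr (\det _); apply/matrixP => i j.
by rewrite !mxE /= horner_evalE hornerD hornerN hornerMn hornerX hornerC.
Qed.

Lemma sub_scalar_unitmx (F : fieldType) n (A : 'M[F]_n) y :
  ~~ root (char_poly A) y -> y%:M - A \in unitmx.
Proof. by rewrite unitmxE unitfE -char_poly_horner. Qed.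

Lemma sub_scalar_block (R : pzRingType) n1 n2 (A : 'M[R]_(n1 + n2)) y :
  y%:M - A =
  block_mx (y%:M - ulsubmx A) (- ursubmx A) (- dlsubmx A) (y%:M - drsubmx A).
Proof.
by rewrite -{1}(submxK A) (scalar_mx_block n1 n2 y) opp_block_mx add_block_mx !sub0r.
Qed.

Section RealClosedPolynomials.
Variable R : rcfType.
Implicit Types (p : {poly R}) (l x y : R).

Lemma monic_horner_gt0 p l : p \is monic ->
  {in `[l, +oo[, forall x, ~~ root p x} -> {in `[l, +oo[, forall y, 0 < p.[y]}.
Proof.
move=> /monicP p_monic noroot y yl; have := sgp_pinftyP noroot yl.
by rewrite /sgp_pinfty p_monic sgr1 => /eqP; rewrite sgr_cp0.
Qed.

Lemma horner_le0_right p x : (forall y, x < y -> p.[y] <= 0) -> p.[x] <= 0.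
Proof.
move=> p_le0; rewrite leNgt; apply/negP => px_gt0.
have [d d_gt0 near_x] := poly_cont x p px_gt0.
have : `|x + d / 2 - x| < d.
  by rewrite addrC addKr gtr0_norm ?ltr_pdivrMr ?ltr_pMr ?ltr1n ?divr_gt0.
move=> /near_x; rewrite ltr_norml => /andP[+ _].
have := p_le0 (x + d / 2); rewrite ltrDl divr_gt0 // => /(_ isT); lra.
Qed.

Lemma poly_max_root p x : p != 0 -> root p x ->
  exists2 m, root p m & forall y, root p y -> y <= m.
Proof.
move=> p_neq0 px; have rootsRE y : root p y = (y \in rootsR p).
  by have := roots_on_rootsR p_neq0 y; rewrite in_itv /= => ->.
exists (\big[Num.max/x]_(y <- rootsR p) y).
  by rewrite big_seq; elim/big_ind: _ => // [y z py pz|y]; [case: leP | rewrite rootsRE].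
by move=> y; rewrite rootsRE => y_root; apply: (le_bigmax_seq x y xpredT id).
Qed.

End RealClosedPolynomials.

Section InverseNonnegativeStep.
Variables (R : rcfType) (n : nat) (B : 'M[R]_(1 + n)).
Hypothesis B_nneg : nnegmx B.
Local Notation b := (ulsubmx B 0 0).
Local Notation r := (ursubmx B).
Local Notation c := (dlsubmx B).
Local Notation B' := (drsubmx B).
Hypothesis IH : forall y, {in `[y, +oo[, forall x, ~~ root (char_poly B') x} ->
  nnegmx (invmx (y%:M - B')).

Lemma char_poly_horner_schur y : ~~ root (char_poly B') y ->
  (char_poly B).[y] = (char_poly B').[y] * (y - b - (r *m invmx (y%:M - B') *m c) 0 0).
Proof.
move=> /sub_scalar_unitmx uy; rewrite !char_poly_horner sub_scalar_block.
by rewrite det_block_schur // det_mx11 mulNmx mulmxN mulNmx opprK !mxE eqxx mulr1n.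
Qed.

Lemma char_poly_drsubmx_noroot l :
    {in `[l, +oo[, forall x, ~~ root (char_poly B) x} ->
  {in `[l, +oo[, forall x, ~~ root (char_poly B') x}.
Proof.
(* Beyond the largest root m of char_poly B', the Schur formula and the induction
   hypothesis give p_B(y) <= (y - b) p_B'(y); in the limit y -> m this forces
   p_B(m) <= 0, contradicting positivity of p_B on [l, +oo[. *)
move=> noroot y0 y0l; apply/negP => y0_root.
have [m m_root m_max] := poly_max_root (monic_neq0 (char_poly_monic B')) y0_root.
have ml : m \in `[l, +oo[.
  by move: y0l; rewrite !in_itv /= !andbT => /le_trans; apply; apply: m_max.
have noroot' y : m < y -> {in `[y, +oo[, forall x, ~~ root (char_poly B') x}.
  move=> my x; rewrite in_itv /= andbT => yx; apply/negP => /m_max.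
  by rewrite leNgt (lt_le_trans my yx).
pose q := char_poly B - ('X - b%:P) * char_poly B'.
have q_le0 y : m < y -> q.[y] <= 0.
  move=> my; have yy : y \in `[y, +oo[ by rewrite in_itv /= lexx.
  have d_gt0 := monic_horner_gt0 (char_poly_monic _) (noroot' y my) yy.
  have t_ge0 : 0 <= (r *m invmx (y%:M - B') *m c) 0 0.
    have [_ hr hc _] := nnegmx_submx B_nneg.
    by apply: nnegmxM => //; apply: nnegmxM => //; apply: IH; apply: noroot'.
  rewrite /q hornerD hornerN hornerM hornerXsubC.
  rewrite char_poly_horner_schur ?(noroot' y my) //; nra.
have := horner_le0_right q_le0.
rewrite /q hornerD hornerN hornerM (rootP m_root) mulr0 subr0 leNgt.
by rewrite (monic_horner_gt0 (char_poly_monic _) noroot ml).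
Qed.

Lemma nnegmx_invmx_sub_step l : {in `[l, +oo[, forall x, ~~ root (char_poly B) x} ->
  nnegmx (invmx (l%:M - B)).
Proof.
move=> noroot; have noroot' := char_poly_drsubmx_noroot noroot.
have ll : l \in `[l, +oo[ by rewrite in_itv /= lexx.
have [_ hr hc _] := nnegmx_submx B_nneg.
set Z := invmx (l%:M - B'); set s := l - b - (r *m Z *m c) 0 0.
have s_gt0 : 0 < s.
  have := monic_horner_gt0 (char_poly_monic _) noroot ll.
  rewrite char_poly_horner_schur ?noroot' // pmulr_rgt0 //.
  by apply: (monic_horner_gt0 (char_poly_monic B') noroot').
have S_eq : l%:M - ulsubmx B - r *m invmx (l%:M - B') *m c = s%:M.
  by rewrite -/Z /s; move: (r *m Z *m c) => T; rewrite [LHS]mx11_scalar !mxE eqxx mulr1n.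
rewrite sub_scalar_block; apply: nnegmx_invmx_block; rewrite ?S_eq ?invmx_scalar //.
- exact: sub_scalar_unitmx (noroot' l ll).
- by rewrite unitmxE det_scalar1 unitfE gt_eqF.
- exact: IH.
- by apply: nnegmx_scalar; rewrite invr_ge0 ltW.
Qed.

End InverseNonnegativeStep.

Lemma nnegmx_invmx_sub (R : rcfType) n (B : 'M[R]_n) l : nnegmx B ->
    {in `[l, +oo[, forall x, ~~ root (char_poly B) x} ->
  nnegmx (invmx (l%:M - B)).
Proof.
elim: n B l => [|n IH] B l B_nneg noroot; first by move=> [].
apply: (nnegmx_invmx_sub_step (B := B : 'M_(1 + n))) => // y.
by apply: IH; have [] := @nnegmx_submx _ 1 n 1 n B B_nneg.
Qed.

Lemma delta_mx_mul_delta (R : pzSemiRingType) m n p q (i : 'I_m) (j : 'I_n)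
    (k : 'I_p) (l : 'I_q) (M : 'M[R]_(n, p)) :
  delta_mx i j *m M *m delta_mx k l = M j k *: delta_mx i l.
Proof.
apply/matrixP => s t; rewrite mxE (bigD1 k) //= big1 ?addr0; last first.
  by move=> h hk; rewrite [delta_mx k l h t]mxE (negbTE hk) mulr0.
rewrite !mxE (bigD1 j) //= big1 ?addr0; last first.
  by move=> h hj; rewrite !mxE (negbTE hj) andbF mul0r.
rewrite !mxE !eqxx /=.
by case: (s == i); case: (t == l); rewrite ?mulr1 ?mul1r ?mulr0 ?mul0r.
Qed.

Lemma sherman_morrison_delta (F : fieldType) n (N X : 'M[F]_n) i j a :
    N *m X = 1%:M -> a * X i j != 1 ->
  (N - a *: delta_mx j i) *m (X + (a / (1 - a * X i j)) *: (X *m delta_mx j i *m X))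
    = 1%:M.
Proof.
move=> NX aX_neq1; set c := a / _.
rewrite mulmxBl !mulmxDr NX -!scalemxAr !mulmxA NX mul1mx -!scalemxAl.
rewrite delta_mx_mul_delta -scalemxAl !scalerA -scalerDl -addrA -scalerBl.
have -> : c - (a + c * a * X i j) = 0.
  by rewrite /c; field; rewrite subr_eq0 eq_sym.
by rewrite scale0r addr0.
Qed.

Lemma nnegmx_mul_nonpos_eq0 (R : numDomainType) m n (u : 'M[R]_(m, n)) (N Y : 'M[R]_n) :
    nnegmx u -> nnegmx Y -> N *m Y = 1%:M -> (forall p q, (u *m N) p q <= 0) ->
  u = 0.
Proof.
move=> u_nneg Y_nneg NY uN_le0; apply/matrixP => p q; apply/eqP.
rewrite mxE eq_le u_nneg andbT -[u]mulmx1 -NY mulmxA mxE.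
by apply: sumr_le0 => k _; apply: mulr_le0_ge0.
Qed.

Section SpectralRadius.
Variable R : realType.
Local Notation normc := (@ComplexField.Normc.normc R).

Lemma normcE (z : R[i]) : `|z| = (normc z)%:C%C.
Proof. by case: z => a b; rewrite normc_def. Qed.

Lemma normc_ge0 (z : R[i]) : 0 <= normc z.
Proof. by rewrite -lecR -normcE normr_ge0. Qed.

Lemma normc_real (x : R) : normc x%:C%C = `|x|.
Proof. by rewrite /= expr0n /= addr0 sqrtr_sqr. Qed.

Lemma eigenvalue_cplxmx_real n (A : 'M[R]_n) y :
  root (char_poly A) y -> eigenvalue (cplxmx A) y%:C%C.
Proof. by rewrite eigenvalue_root_char -map_char_poly fmorph_root. Qed.

Lemma eigenvalue_cplxmx_finite n (A : 'M[R]_n) :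
  exists rs : seq R[i], forall z, eigenvalue (cplxmx A) z -> z \in rs.
Proof.
have [rs rsE] := closed_field_poly_normal (char_poly (cplxmx A)).
exists rs => z; rewrite eigenvalue_root_char rsE (monicP (char_poly_monic _)).
by rewrite scale1r root_prod_XsubC.
Qed.

Local Open Scope classical_set_scope.

Lemma spectral_radius_ge n (A : 'M[R]_n) z :
  eigenvalue (cplxmx A) z -> normc z <= spectral_radius A.
Proof.
move=> Az; have [rs rsP] := eigenvalue_cplxmx_finite A; apply: ub_le_sup; last by exists z.
exists (\big[Num.max/0]_(x <- rs) normc x) => _ [x Ax <-].
exact: (le_bigmax_seq 0 x xpredT normc (rsP x Ax)).
Qed.

Lemma spectral_radius_lt n (A : 'M[R]_n) c : 0 < c ->
  (forall z, eigenvalue (cplxmx A) z -> normc z < c) -> spectral_radius A < c.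
Proof.
move=> c_gt0 A_lt; have [rs rsP] := eigenvalue_cplxmx_finite A.
rewrite /spectral_radius; set S := [set _ | _ in _].
have [S_ne|S_empty] := pselect (S !=set0); last first.
  suff -> : S = set0 by rewrite sup0.
  by apply/seteqP; split=> // y Sy; apply: S_empty; exists y.
pose m := \big[Num.max/0]_(x <- rs | eigenvalue (cplxmx A) x) normc x.
have m_lt : m < c by apply: bigmax_lt.
apply: le_lt_trans m_lt; apply: ge_sup S_ne _ => _ [x Ax <-].
exact: (le_bigmax_seq 0 x _ normc (rsP x Ax)).
Qed.

Local Close Scope classical_set_scope.

Lemma eigenvector_normc_le n (M C : 'M[R]_n) z (v : 'rV[R[i]]_n) :
    (forall p q, `|M p q| <= C p q) -> v *m cplxmx M = z *: v ->
  forall q, normc z * normc (v 0 q) <= \sum_p normc (v 0 p) * C p q.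
Proof.
move=> MC vM q; have := congr1 (fun m : 'M[R[i]]_(1, n) => m 0 q) vM; rewrite !mxE => vMq.
rewrite -lecR rmorphM rmorph_sum /= -!normcE -normrM -vMq.
apply: le_trans (ler_norm_sum _ _ _) _; apply: ler_sum => p _.
by rewrite !mxE normrM !normcE normc_real -rmorphM lecR ler_wpM2l ?normc_ge0.
Qed.

Lemma eigenvalue_normc_lt n (M C Y : 'M[R]_n) l z :
    nnegmx Y -> (l%:M - C) *m Y = 1%:M -> (forall p q, `|M p q| <= C p q) ->
  eigenvalue (cplxmx M) z -> normc z < l.
Proof.
move=> Y_nneg CY MC /eigenvalueP [v vM v_neq0]; rewrite ltNge; apply/negP => lz.
pose u := map_mx normc v.
have u_nneg : nnegmx u by move=> p q; rewrite mxE normc_ge0.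
suff u0 : u = 0.
  move/negP: v_neq0; apply; apply/eqP/matrixP => p q.
  have := congr1 (fun m : 'M[R]_(1, n) => m p q) u0; rewrite !mxE => vpq.
  by apply/eqP; rewrite -normr_eq0 normcE vpq.
apply: (nnegmx_mul_nonpos_eq0 u_nneg Y_nneg CY) => p q.
rewrite /u mulmxBr mul_mx_scalar !mxE subr_le0 (ord1 p).
under eq_bigr do rewrite mxE.
exact: le_trans (ler_wpM2r (normc_ge0 _) lz) (eigenvector_normc_le MC vM q).
Qed.

Lemma spectral_radius_lt_noroot n (A : 'M[R]_n) l : spectral_radius A < l ->
  {in `[l, +oo[, forall y, ~~ root (char_poly A) y}.
Proof.
move=> A_lt y; rewrite in_itv /= andbT => ly; apply/negP.
move=> /eigenvalue_cplxmx_real /spectral_radius_ge; rewrite normc_real => y_le.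
by have := le_lt_trans (le_trans (ler_norm y) y_le) A_lt; rewrite ltNge ly.
Qed.

End SpectralRadius.

Theorem theorem5p4 (R : realType) (n : nat) (A : 'M[R]_n) (i j : 'I_n) (w : R) :
  spectral_radius (absmx A) < 1 ->
  let X := invmx (1%:M - absmx A) in
  (X i j != 0 -> - (X i j)^-1 < w < (X i j)^-1) ->
  spectral_radius (A + w *: delta_mx j i) < 1.
Proof.
move=> sr_lt1 X w_bound; set B := absmx A.
have B_nneg : nnegmx B := nnegmx_abs A.
have noroot := spectral_radius_lt_noroot sr_lt1.
have X_nneg : nnegmx X := nnegmx_invmx_sub B_nneg noroot.
have wX_lt1 : `|w| * X i j < 1.
  have [->|Xij_neq0] := eqVneq (X i j) 0; first by rewrite mulr0 ltr01.
  have Xij_gt0 : 0 < X i j by rewrite lt_def Xij_neq0 X_nneg.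
  by rewrite -ltr_pdivlMr // mul1r ltr_norml w_bound.
pose C := B + `|w| *: delta_mx j i.
pose Y := X + (`|w| / (1 - `|w| * X i j)) *: (X *m delta_mx j i *m X).
have CY : (1%:M - C) *m Y = 1%:M.
  rewrite opprD addrA; apply: sherman_morrison_delta; last by rewrite lt_eqF.
  by rewrite mulmxV // sub_scalar_unitmx // noroot // in_itv /= lexx.
have Y_nneg : nnegmx Y.
  apply: nnegmxD => //; apply: nnegmxZ; first by rewrite divr_ge0 // subr_ge0 ltW.
  by apply: nnegmxM => //; apply: nnegmxM => //; apply: nnegmx_delta.
have AC p q : `|(A + w *: delta_mx j i) p q| <= C p q.
  by rewrite !mxE (le_trans (ler_normD _ _)) // normrM (ger0_norm (ler0n _ _)).
apply: spectral_radius_lt => // z; exact: eigenvalue_normc_lt Y_nneg CY AC.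
Qed.
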